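(* Let $G=(V,E)$ be a finite, connected, triangle-free graph that contains no dominated vertices and for which $\gamma(G)\ge 3$. Then $\mathrm{cc}(G)>2$.
   Context: All graphs are finite, connected and reflexive (a loop at every vertex; moving along a loop means passing); loops are ignored for triangles and neighbourhoods. $N(u)$ is the open neighbourhood and $N[u]=N(u)\cup\{u\}$. $\gamma$ denotes domination number. A vertex $u$ is dominated if there is a vertex $v\neq u$ with $N(u)\subseteq N[v]$. Cops and Attacking Robbers: the cop player places $k$ cops on vertices, then the robber chooses a vertex. In each round the cops move (each cop moves to an adjacent vertex or passes), then the robber moves (to an adjacent vertex or passes). The cops win if after finitely many moves a cop moves onto the robber's vertex. Additionally, if the robber moves onto a vertex occupied by a cop, exactly one cop on that vertex is removed from the game; the robber's initial placement on a cop's vertex does not count as an attack. Both players play optimally. The attacking cop number $\mathrm{cc}(G)$ is the least $k$ such that $k$ cops can guarantee a win. *)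

From mathcomp Require Import all_boot.
Set Implicit Arguments. Unset Strict Implicit. Unset Printing Implicit Defensive.

Section Graph.
Variables (V : finType) (e : rel V).
(* e is the (loopless) adjacency relation; loops/passing are handled by
   allowing "stay or move along an edge". *)

Definition triangle_free : Prop :=
  forall x y z : V, e x y -> e y z -> e x z -> False.

Definition nbhd (u : V) : {set V} := [set w | e u w].
Definition cnbhd (u : V) : {set V} := u |: nbhd u.

Definition dominated (u : V) : Prop :=
  exists v : V, v != u /\ nbhd u \subset cnbhd v.

Definition dominating (D : {set V}) : Prop :=
  forall x : V, x \in D \/ exists2 y, y \in D & e x y.

Definition step (x y : V) : bool := (x == y) || e x y.

Definition cop_step (cs cs' : seq V) : bool := all2 step cs cs'.

(* CopsWin cs r : it is the cops' turn, the remaining cops are at cs and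
   the robber is at r; the cops can force a capture in finitely many moves.
   After the cops' move, if a cop stands on r the robber is captured.
   Otherwise the robber moves to r' (or passes); if r' carries a cop,
   exactly one cop on r' is removed (rem r' cs'). *)
Inductive CopsWin : seq V -> V -> Prop :=
| cw_capture cs r cs' :
    cop_step cs cs' -> r \in cs' -> CopsWin cs r
| cw_move cs r cs' :
    cop_step cs cs' ->
    (forall r', step r r' -> CopsWin (rem r' cs') r') ->
    CopsWin cs r.

(* k cops can guarantee a win: there is a placement of k cops such that,
   whichever vertex the robber chooses (placing on a cop's vertex is not an
   attack), the cops, moving first, force a capture. *)
Definition cops_win (k : nat) : Prop :=
  exists cs : seq V, size cs = k /\ forall r : V, CopsWin cs r.

Definition cc_gt (k : nat) : Prop := forall j, j <= k -> ~ cops_win j.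

End Graph.

(* The robber keeps the invariant that at most two cops remain and none of
   them is on or next to the robber's vertex; initially this is possible
   because two vertices do not dominate the graph.  After the cops move, no
   cop is on the robber.  If no cop is adjacent, the robber passes.  If a cop
   d1 is adjacent and the other cop d2 is not within reach of d1, the robber
   attacks d1.  Otherwise d2 is on or next to d1; since the robber's vertex r
   is not dominated by d2, it has a neighbour w outside N[d2], and w is not
   within reach of d1 either: w = d1 would put w in N[d2], and an edge d1 w
   would close the triangle r d1 w. *)
From mathcomp Require Import all_boot.

Section AttackingRobber.
Set Implicit Arguments.
Unset Strict Implicit.

Variables (V : finType) (e : rel V).
Hypotheses (e_sym : symmetric e) (e_tf : triangle_free e)
  (no_dom : forall u : V, ~ dominated e u).

Definition safe (cs : seq V) (r : V) : bool := all (fun c => ~~ step e c r) cs.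

Lemma safe_rem_pairC x a b r :
  safe (rem x [:: a; b]) r = safe (rem x [:: b; a]) r.
Proof.
rewrite /=; have [xa|_] := eqVneq x a; have [xb|_] := eqVneq x b;
  by subst; rewrite //= !andbT andbC.
Qed.

Lemma cop_step_size cs cs' : cop_step e cs cs' -> size cs' = size cs.
Proof. by rewrite /cop_step all2E => /andP[/eqP]. Qed.

Lemma safe_cop_step cs cs' r : safe cs r -> cop_step e cs cs' -> r \notin cs'.
Proof.
elim: cs cs' => [|c cs IH] [|d cs'] //= /andP[ncr safe_r] /andP[cd st].
rewrite inE negb_or (IH _ safe_r st) andbT.
by apply: contra ncr => /eqP ->.
Qed.

Lemma exists_nbhd_notin_cnbhd u v : v != u -> exists2 w, e u w & ~~ step e v w.
Proof.
move=> vu; have : ~~ (nbhd e u \subset cnbhd e v).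
  by apply/negP => sub; apply: (@no_dom u); exists v.
case/subsetPn => w; rewrite !inE negb_or => uw /andP[wv vw].
by exists w; rewrite // /step negb_or eq_sym wv.
Qed.

Lemma not_step_triangle r d1 d2 w :
  e r d1 -> e r w -> step e d2 d1 -> ~~ step e d2 w -> ~~ step e d1 w.
Proof.
move=> rd1 rw /orP[/eqP -> //|d2d1] nd2w.
rewrite /step negb_or; apply/andP; split.
  by apply: contraNneq nd2w => <-; rewrite /step d2d1 orbT.
by apply/negP => d1w; exact: e_tf rd1 d1w rw.
Qed.

Lemma escape_pair d1 d2 r : r != d1 -> r != d2 -> e d1 r ->
  exists2 r', step e r r' & safe (rem r' [:: d1; d2]) r'.
Proof.
move=> rd1 rd2 d1r.
have [near|far] := boolP (step e d2 d1); last first.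
  by exists d1; rewrite /= ?eqxx /= ?far // /step e_sym d1r orbT.
have [|w rw nd2w] := @exists_nbhd_notin_cnbhd r d2; first by rewrite eq_sym.
have rd1' : e r d1 by rewrite e_sym.
have nd1w : ~~ step e d1 w := not_step_triangle rd1' rw near nd2w.
have neq_w c : ~~ step e c w -> c != w.
  by apply: contraNneq => ->; rewrite /step eqxx.
exists w; first by rewrite /step rw orbT.
by rewrite /= (negbTE (neq_w _ nd1w)) (negbTE (neq_w _ nd2w)) /= nd1w nd2w.
Qed.

Lemma robber_escapes cs r : size cs <= 2 -> r \notin cs ->
  exists2 r', step e r r' & safe (rem r' cs) r'.
Proof.
move=> size_cs r_cs.
have [near|far] := boolP (has (e^~ r) cs); last first.
  exists r; first by rewrite /step eqxx.
  rewrite (rem_id r_cs); apply/allP => c c_cs; rewrite /step negb_or.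
  by rewrite (hasPn far c c_cs) andbT; apply: contraNneq r_cs => <-.
move: size_cs r_cs near; case: cs => [|d1 [|d2 []]] //= _.
  by rewrite inE orbF => _ d1r; exists d1; rewrite ?eqxx // /step e_sym d1r orbT.
rewrite !inE negb_or orbF => /andP[rd1 rd2] /orP[d1r|d2r].
  exact: escape_pair.
by have [r' rr'] := escape_pair rd2 rd1 d2r; rewrite safe_rem_pairC; exists r'.
Qed.

Lemma robber_survives cs r : CopsWin e cs r -> size cs <= 2 -> safe cs r -> False.
Proof.
elim=> {cs r} [cs r cs' st r_cs'|cs r cs' st _ IH] size_cs safe_r.
  by move/negP: (safe_cop_step safe_r st).
have [|r' rr' safe_r'] := @robber_escapes cs' r _ (safe_cop_step safe_r st).
  by rewrite (cop_step_size st).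
apply: IH rr' _ safe_r'.
by rewrite (leq_trans (size_subseq (rem_subseq _ _))) ?(cop_step_size st).
Qed.

Lemma exists_safe cs : ~ dominating e [set c in cs] -> exists r, safe cs r.
Proof.
case: (pickP (safe cs)) => [r safe_r|none] ndom; first by exists r.
case: ndom => x; have /allPn[c c_cs] := negbT (none x).
rewrite negbK /step => /orP[/eqP <-|cx]; first by left; rewrite inE.
by right; exists c; rewrite ?inE // e_sym.
Qed.

End AttackingRobber.

Theorem lemma2 (V : finType) (e : rel V)
  (e_sym : symmetric e) (e_irr : irreflexive e)
  (e_conn : forall x y : V, connect e x y)
  (e_tf : triangle_free e)
  (no_dom : forall u : V, ~ dominated e u)
  (gamma_ge3 : forall D : {set V}, dominating e D -> 3 <= #|D|) :
  cc_gt e 2.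
Proof.
move=> j le_j2 [cs [size_cs win]].
have [r safe_r] : exists r, safe e cs r.
  apply: (exists_safe e_sym) => dom; have := gamma_ge3 _ dom.
  by rewrite cardsE ltnNge (leq_trans (card_size cs)) ?size_cs.
by apply: (robber_survives e_sym e_tf no_dom (win r)); rewrite ?size_cs.
Qed.
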